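(* Let $\gamma:[0,1]\to\mathbb{C}$ be a Jordan arc (continuous and injective) and $t_0\in(0,1)$. Assume that for every open interval $I\subset(0,1)$ with $t_0\in I$ and every function $f:I\to\mathbb{C}$ the following two conditions are equivalent: (1) there are a power series $\sum_{n\ge0}a_n(t-t_0)^n$ with radius of convergence $r>0$ and $0<\delta\le r$ such that $f(t)=\sum_{n\ge0}a_n(t-t_0)^n$ for $t\in(t_0-\delta,t_0+\delta)$; (2) there are a power series $\sum_{n\ge0}b_n(z-\gamma(t_0))^n$ with radius of convergence $s>0$ and $0<\epsilon\le s$ such that $f(t)=\sum_{n\ge0}b_n(\gamma(t)-\gamma(t_0))^n$ for $t\in(t_0-\epsilon,t_0+\epsilon)$. Then $\gamma$ is locally analytic at $t_0$: there exist $\delta>0$ with $(t_0-\delta,t_0+\delta)\subset[0,1]$, an open set $V\subset\mathbb{C}$ containing $(t_0-\delta,t_0+\delta)$, and an injective holomorphic (conformal) map $\phi:V\to\mathbb{C}$ with $\phi=\gamma$ on $(t_0-\delta,t_0+\delta)$. *)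

From Stdlib Require Import Reals.
Open Scope R_scope.

Definition Cx : Type := (R * R)%type.
Definition RtoC (x : R) : Cx := (x, 0).
Definition Cadd (z w : Cx) : Cx := (fst z + fst w, snd z + snd w).
Definition Copp (z : Cx) : Cx := (- fst z, - snd z).
Definition Csub (z w : Cx) : Cx := Cadd z (Copp w).
Definition Cmul (z w : Cx) : Cx :=
  (fst z * fst w - snd z * snd w, fst z * snd w + snd z * fst w).
Fixpoint Cpow (z : Cx) (n : nat) : Cx :=
  match n with O => (1, 0) | S m => Cmul z (Cpow z m) end.
Definition Cnorm (z : Cx) : R := sqrt (fst z * fst z + snd z * snd z).

Fixpoint Cpartial (u : nat -> Cx) (n : nat) : Cx :=
  match n with O => u O | S m => Cadd (Cpartial u m) (u (S m)) end.

Definition Cseries_cv (u : nat -> Cx) (l : Cx) : Prop :=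
  forall eps, eps > 0 -> exists N : nat, forall n, (n >= N)%nat ->
    Cnorm (Csub (Cpartial u n) l) < eps.

(* The radius of convergence of sum_n a_n w^n (= sup of |w| at which the
   series converges) is >= r : the series converges at every w with |w| < r. *)
Definition radius_ge (a : nat -> Cx) (r : R) : Prop :=
  forall w : Cx, Cnorm w < r -> exists l, Cseries_cv (fun n => Cmul (a n) (Cpow w n)) l.

Definition jordan_arc (g : R -> Cx) : Prop :=
  (forall t, 0 <= t <= 1 -> forall eps, eps > 0 -> exists d, d > 0 /\
     forall s, 0 <= s <= 1 -> Rabs (s - t) < d -> Cnorm (Csub (g s) (g t)) < eps) /\
  (forall s t, 0 <= s <= 1 -> 0 <= t <= 1 -> g s = g t -> s = t).

Definition cond1 (a b t0 : R) (f : R -> Cx) : Prop :=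
  exists (c : nat -> Cx) (r d : R), r > 0 /\ radius_ge c r /\ 0 < d <= r /\
    (forall t, t0 - d < t < t0 + d -> a < t < b) /\
    (forall t, t0 - d < t < t0 + d ->
       Cseries_cv (fun n => Cmul (c n) (Cpow (RtoC (t - t0)) n)) (f t)).

Definition cond2 (g : R -> Cx) (a b t0 : R) (f : R -> Cx) : Prop :=
  exists (c : nat -> Cx) (s e : R), s > 0 /\ radius_ge c s /\ 0 < e <= s /\
    (forall t, t0 - e < t < t0 + e -> a < t < b) /\
    (forall t, t0 - e < t < t0 + e ->
       Cseries_cv (fun n => Cmul (c n) (Cpow (Csub (g t) (g t0)) n)) (f t)).

Definition Copen (V : Cx -> Prop) : Prop :=
  forall z, V z -> exists r, r > 0 /\ forall w, Cnorm (Csub w z) < r -> V w.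

Definition holomorphic_on (V : Cx -> Prop) (phi : Cx -> Cx) : Prop :=
  forall z, V z -> exists L : Cx, forall eps, eps > 0 -> exists d, d > 0 /\
    forall w, V w -> Cnorm (Csub w z) < d ->
      Cnorm (Csub (Csub (phi w) (phi z)) (Cmul L (Csub w z))) <= eps * Cnorm (Csub w z).

Definition injective_on (V : Cx -> Prop) (phi : Cx -> Cx) : Prop :=
  forall z w, V z -> V w -> phi z = phi w -> z = w.

(* Applied to f = gamma, which satisfies (2) with the series gamma(t0) + w, the
   hypothesis gives gamma(t) = sum a_n (t - t0)^n near t0; applied to f(t) = t, which
   satisfies (1), it gives t = sum b_n (gamma(t) - gamma(t0))^n.  If a_1 were 0, then
   |gamma(t0 + h) - gamma(t0)| = O(h^2) by the first expansion, whereas the second gives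
   h = O(|gamma(t0 + h) - gamma(t0)|): absurd for small h > 0.  So a_1 <> 0, and
   phi(z) = sum a_n (z - t0)^n is holomorphic on a disc around t0, agrees with gamma on
   its real points, and is injective on a disc small enough for the linear term a_1 z
   to dominate the higher-order terms. *)

From Stdlib Require Import Reals Lra Lia ClassicalEpsilon.
From Coquelicot Require Import Coquelicot.
Open Scope R_scope.

Lemma Cx_ring_theory :
  @ring_theory Cx (0, 0) (1, 0) Cadd Cmul Csub Copp (@eq Cx).
Proof.
  split; intros; apply injective_projections;
    unfold Csub, Cadd, Copp, Cmul; simpl; ring.
Qed.

Add Ring Cx_ring : Cx_ring_theory.

(* [ring] selects the structure from the type of the goal, and a literal [(0, 0)]
   is typed [R * R] rather than [Cx]. *)
Add Ring Cx_pair_ring : (Cx_ring_theory : @ring_theory (R * R) _ _ _ _ _ _ _).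

Implicit Types (z w X l : Cx) (u v c : nat -> Cx).

Lemma RtoC_add x y : RtoC (x + y) = Cadd (RtoC x) (RtoC y).
Proof. apply injective_projections; unfold RtoC, Cadd; simpl; ring. Qed.

Lemma RtoC_sub x y : RtoC (x - y) = Csub (RtoC x) (RtoC y).
Proof. apply injective_projections; unfold RtoC, Csub, Cadd, Copp; simpl; ring. Qed.

Lemma Csub_diag z : Csub z z = (0, 0).
Proof. ring. Qed.

Lemma Csub_eq0 z w : Csub z w = (0, 0) -> z = w.
Proof. intro H. replace z with (Cadd (Csub z w) w) by ring. rewrite H. ring. Qed.

Lemma Cnorm_Cmod z : Cnorm z = Cmod z.
Proof. unfold Cnorm, Cmod. f_equal. ring. Qed.

Lemma Cnorm_ge0 z : 0 <= Cnorm z.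
Proof. rewrite Cnorm_Cmod. apply Cmod_ge_0. Qed.

Lemma Cnorm_add_le z w : Cnorm (Cadd z w) <= Cnorm z + Cnorm w.
Proof. rewrite !Cnorm_Cmod. apply Cmod_triangle. Qed.

Lemma Cnorm_mul z w : Cnorm (Cmul z w) = Cnorm z * Cnorm w.
Proof. rewrite !Cnorm_Cmod. apply Cmod_mult. Qed.

Lemma Cnorm_pow z n : Cnorm (Cpow z n) = Cnorm z ^ n.
Proof.
  induction n as [|n IH]; simpl.
  - rewrite Cnorm_Cmod. apply Cmod_1.
  - now rewrite Cnorm_mul, IH.
Qed.

Lemma Cnorm_RtoC x : Cnorm (RtoC x) = Rabs x.
Proof. rewrite Cnorm_Cmod. apply Cmod_R. Qed.

Lemma Cnorm_zero : Cnorm (0, 0) = 0.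
Proof. rewrite Cnorm_Cmod. apply Cmod_0. Qed.

Lemma Cnorm_eq0 z : Cnorm z = 0 -> z = (0, 0).
Proof. rewrite Cnorm_Cmod. apply Cmod_eq_0. Qed.

Lemma Cnorm_opp z : Cnorm (Copp z) = Cnorm z.
Proof. rewrite !Cnorm_Cmod. apply Cmod_opp. Qed.

Lemma Cnorm_sub_sym z w : Cnorm (Csub z w) = Cnorm (Csub w z).
Proof. replace (Csub z w) with (Copp (Csub w z)) by ring. apply Cnorm_opp. Qed.

Lemma Cnorm_sub_le z y w : Cnorm (Csub z w) <= Cnorm (Csub z y) + Cnorm (Csub y w).
Proof.
  replace (Csub z w) with (Cadd (Csub z y) (Csub y w)) by ring. apply Cnorm_add_le.
Qed.

(** * Complex series *)

Lemma Cpartial_sum_n u n : Cpartial u n = sum_n (G := C_AbelianMonoid) u n.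
Proof.
  induction n as [|n IH]; simpl.
  - now rewrite sum_O.
  - now rewrite sum_Sn, <- IH.
Qed.

Lemma Cseries_cv_is_series u l :
  Cseries_cv u l <-> is_series (K := C_AbsRing) (V := C_NormedModule) u l.
Proof.
  unfold is_series.
  rewrite (filterlim_locally_ball_norm (K := C_AbsRing) (U := C_NormedModule)).
  split.
  - intros H [eps Heps]. destruct (H eps Heps) as [N HN]. exists N. intros n Hn.
    specialize (HN n Hn). now rewrite Cpartial_sum_n, Cnorm_Cmod in HN.
  - intros H eps Heps. destruct (H (mkposreal eps Heps)) as [N HN]. exists N.
    intros n Hn. specialize (HN n Hn). now rewrite Cpartial_sum_n, Cnorm_Cmod.
Qed.

Lemma Cseries_unique u l l' : Cseries_cv u l -> Cseries_cv u l' -> l = l'.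
Proof.
  rewrite !Cseries_cv_is_series.
  apply (filterlim_locally_unique (K := C_AbsRing) (V := C_NormedModule)).
Qed.

Lemma Cseries_sub u v l l' : Cseries_cv u l -> Cseries_cv v l' ->
  Cseries_cv (fun n => Csub (u n) (v n)) (Csub l l').
Proof.
  rewrite !Cseries_cv_is_series. apply (is_series_minus (V := C_NormedModule)).
Qed.

Lemma Cseries_ext u v l : (forall n, u n = v n) -> Cseries_cv u l -> Cseries_cv v l.
Proof. rewrite !Cseries_cv_is_series. apply (is_series_ext (V := C_NormedModule)). Qed.

Lemma Cseries_mulr u l X : Cseries_cv u l -> Cseries_cv (fun n => Cmul (u n) X) (Cmul l X).
Proof.
  intro H. replace (Cmul l X) with (Cmul X l) by ring.
  apply Cseries_ext with (fun n => Cmul X (u n)); [intro n; ring|].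
  apply Cseries_cv_is_series, (is_series_scal (V := C_NormedModule)).
  now apply Cseries_cv_is_series.
Qed.

Lemma Cseries_ex_geom u K y : 0 <= y < 1 -> (forall n, Cnorm (u n) <= K * y ^ n) ->
  exists l, Cseries_cv u l.
Proof.
  intros Hy Hu. assert (Hex : ex_series (K := C_AbsRing) (V := C_NormedModule) u).
  { apply (ex_series_le (V := C_CompleteNormedModule) u (fun n => K * y ^ n)).
    - intro n. rewrite <- Cnorm_Cmod. apply Hu.
    - apply (ex_series_scal_l (V := R_NormedModule) K), ex_series_geom.
      rewrite Rabs_pos_eq; lra. }
  destruct Hex as [l Hl]. exists l. now apply Cseries_cv_is_series.
Qed.

Lemma Cseries_terms_bounded u l : Cseries_cv u l -> exists B, forall n, Cnorm (u n) <= B.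
Proof.
  rewrite Cseries_cv_is_series. intro Hl.
  destruct (filterlim_bounded (V := C_NormedModule) (sum_n u)) as [B HB]; [now exists l|].
  assert (Hpartial : forall n, Cnorm (Cpartial u n) <= B).
  { intro n. rewrite Cpartial_sum_n, Cnorm_Cmod. apply HB. }
  exists (2 * B). intros [|n].
  - pose proof (Hpartial O). pose proof (Cnorm_ge0 (u O)). simpl in *. lra.
  - replace (u (S n)) with (Cadd (Cpartial u (S n)) (Copp (Cpartial u n))) by (simpl; ring).
    eapply Rle_trans; [apply Cnorm_add_le|]. rewrite Cnorm_opp.
    pose proof (Hpartial (S n)). pose proof (Hpartial n). lra.
Qed.

Lemma Cseries_norm_le_of_partial u l B : (forall n, Cnorm (Cpartial u n) <= B) ->
  Cseries_cv u l -> Cnorm l <= B.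
Proof.
  intros HB Hl. apply Rnot_lt_le. intro HlB.
  destruct (Hl (Cnorm l - B)) as [N HN]; [lra|].
  specialize (HN N (le_n N)). specialize (HB N).
  pose proof (Cnorm_add_le (Csub l (Cpartial u N)) (Cpartial u N)) as Htri.
  replace (Cadd (Csub l (Cpartial u N)) (Cpartial u N)) with l in Htri by ring.
  rewrite Cnorm_sub_sym in Htri. lra.
Qed.

Lemma Cpartial_norm_le_geom u K n : (forall k, Cnorm (u k) <= K * (/2) ^ k) ->
  Cnorm (Cpartial u n) <= 2 * K - K * (/2) ^ n.
Proof.
  intro Hu. induction n as [|n IH]; simpl.
  - specialize (Hu O). simpl in Hu. lra.
  - eapply Rle_trans; [apply Cnorm_add_le|]. specialize (Hu (S n)). simpl in Hu. lra.
Qed.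

Lemma Cseries_norm_le_geom u l K : (forall n, Cnorm (u n) <= K * (/2) ^ n) ->
  Cseries_cv u l -> Cnorm l <= 2 * K.
Proof.
  intros Hu. apply Cseries_norm_le_of_partial. intro n.
  assert (HK : 0 <= K) by (pose proof (Hu O); pose proof (Cnorm_ge0 (u O)); simpl in *; lra).
  pose proof (Cpartial_norm_le_geom u K n Hu).
  assert (0 <= K * (/2) ^ n) by (apply Rmult_le_pos; [lra | apply pow_le; lra]). lra.
Qed.

Lemma pow_le_shift y k n : 0 <= y <= /2 -> (k <= n)%nat -> y ^ n <= 2 ^ k * y ^ k * (/2) ^ n.
Proof.
  intros Hy Hk. replace n with (k + (n - k))%nat by lia. rewrite !pow_add.
  replace (2 ^ k * y ^ k * ((/2) ^ k * (/2) ^ (n - k)))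
    with (y ^ k * (/2) ^ (n - k) * (2 * /2) ^ k) by (rewrite Rpow_mult_distr; ring).
  rewrite Rinv_r, pow1, Rmult_1_r by lra.
  apply Rmult_le_compat_l; [apply pow_le; lra | apply pow_incr; lra].
Qed.

Lemma Cseries_tail_le u l K y k : 0 <= y <= /2 ->
  (forall n, (n < k)%nat -> u n = (0, 0)) -> (forall n, Cnorm (u n) <= K * y ^ n) ->
  Cseries_cv u l -> Cnorm l <= 2 ^ S k * K * y ^ k.
Proof.
  intros Hy Hzero Hu Hl.
  assert (HK : 0 <= K) by (pose proof (Hu O); pose proof (Cnorm_ge0 (u O)); simpl in *; lra).
  replace (2 ^ S k * K * y ^ k) with (2 * (K * 2 ^ k * y ^ k)) by (simpl; ring).
  apply (Cseries_norm_le_geom u). 2: exact Hl. intro n.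
  destruct (Nat.lt_ge_cases n k) as [Hnk | Hkn].
  - rewrite Hzero, Cnorm_zero by exact Hnk.
    apply Rmult_le_pos; [|apply pow_le; lra].
    apply Rmult_le_pos; [|apply pow_le; lra]. apply Rmult_le_pos; [lra | apply pow_le; lra].
  - eapply Rle_trans; [apply Hu|]. rewrite !Rmult_assoc.
    apply Rmult_le_compat_l; [exact HK|]. rewrite <- Rmult_assoc. now apply pow_le_shift.
Qed.

Lemma Cseries_single k X : Cseries_cv (fun n => if Nat.eqb n k then X else (0, 0)) X.
Proof.
  assert (Hpartial : forall n, Cpartial (fun n => if Nat.eqb n k then X else (0, 0)) n
                               = if Nat.leb k n then X else (0, 0)).
  { induction n as [|n IH]; cbn [Cpartial].
    - now destruct k.
    - rewrite IH.
      destruct (Nat.eqb_spec (S n) k), (Nat.leb_spec k n), (Nat.leb_spec k (S n));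
        try lia; ring. }
  intros eps Heps. exists k. intros n Hn.
  rewrite Hpartial. destruct (Nat.leb_spec k n); [|lia].
  rewrite Csub_diag, Cnorm_zero. lra.
Qed.

(** * Power series *)

Lemma pseries_at_center c l : Cseries_cv (fun n => Cmul (c n) (Cpow (0, 0) n)) l -> l = c O.
Proof.
  intro Hl. apply (Cseries_unique _ _ _ Hl).
  apply Cseries_ext with (fun n => if Nat.eqb n 0 then c O else (0, 0)).
  - intros [|n]; cbn [Nat.eqb Cpow]; ring.
  - apply Cseries_single.
Qed.

Definition Cdrop0 (c : nat -> Cx) (n : nat) : Cx :=
  match n with O => (0, 0) | S _ => c n end.

Lemma pseries_drop0 c X l : Cseries_cv (fun n => Cmul (c n) (Cpow X n)) l ->
  Cseries_cv (fun n => Cmul (Cdrop0 c n) (Cpow X n)) (Csub l (c O)).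
Proof.
  intro Hl. apply Cseries_ext with
    (fun n => Csub (Cmul (c n) (Cpow X n)) (if Nat.eqb n 0 then c O else (0, 0))).
  - intros [|n]; cbn [Nat.eqb Cpow Cdrop0]; ring.
  - apply Cseries_sub; [exact Hl | apply Cseries_single].
Qed.

Lemma Cdrop0_coef_le c p M : 0 <= p -> (forall n, Cnorm (c n) * p ^ n <= M) ->
  forall n, Cnorm (Cdrop0 c n) * p ^ n <= M.
Proof.
  intros Hp Hc [|n]; [|apply Hc].
  pose proof (Hc O). pose proof (Cnorm_ge0 (c O)). cbn [Cdrop0]. rewrite Cnorm_zero.
  simpl in *. lra.
Qed.

Definition affine_coef (z0 : Cx) (n : nat) : Cx :=
  match n with O => z0 | 1 => (1, 0) | _ => (0, 0) end.

Lemma affine_series z0 w :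
  Cseries_cv (fun n => Cmul (affine_coef z0 n) (Cpow w n)) (Cadd z0 w).
Proof.
  replace (Cadd z0 w) with (Csub z0 (Copp w)) by ring.
  apply Cseries_ext with (fun n => Csub (if Nat.eqb n 0 then z0 else (0, 0))
                                        (if Nat.eqb n 1 then Copp w else (0, 0))).
  - intros [|[|n]]; cbn [Nat.eqb Cpow affine_coef]; ring.
  - apply Cseries_sub; apply Cseries_single.
Qed.

Lemma affine_radius z0 r : radius_ge (affine_coef z0) r.
Proof. intros w _. eexists. apply affine_series. Qed.

Lemma radius_coef_bounded c r p : radius_ge c r -> 0 <= p < r ->
  exists M, 0 < M /\ forall n, Cnorm (c n) * p ^ n <= M.
Proof.
  intros Hc Hp. destruct (Hc (RtoC p)) as [l Hl].
  { rewrite Cnorm_RtoC, Rabs_pos_eq; lra. }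
  destruct (Cseries_terms_bounded _ _ Hl) as [B HB].
  exists (Rabs B + 1). split; [pose proof (Rabs_pos B); lra|]. intro n.
  specialize (HB n). rewrite Cnorm_mul, Cnorm_pow, Cnorm_RtoC, Rabs_pos_eq in HB by lra.
  pose proof (Rle_abs B). lra.
Qed.

Lemma pseries_term_le c p M X n : 0 < p -> Cnorm (c n) * p ^ n <= M ->
  Cnorm (Cmul (c n) (Cpow X n)) <= M * (Cnorm X / p) ^ n.
Proof.
  intros Hp Hc. rewrite Cnorm_mul, Cnorm_pow.
  replace (Cnorm X ^ n) with (p ^ n * (Cnorm X / p) ^ n)
    by (rewrite <- Rpow_mult_distr; f_equal; field; lra).
  rewrite <- Rmult_assoc. apply Rmult_le_compat_r; [|exact Hc].
  apply pow_le, Rdiv_le_0_compat; [apply Cnorm_ge0 | lra].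
Qed.

Lemma pseries_tail_le c p M k X l : 0 < p -> (forall n, Cnorm (c n) * p ^ n <= M) ->
  (forall n, (n < k)%nat -> c n = (0, 0)) -> 2 * Cnorm X <= p ->
  Cseries_cv (fun n => Cmul (c n) (Cpow X n)) l ->
  Cnorm l <= 2 ^ S k * M / p ^ k * Cnorm X ^ k.
Proof.
  intros Hp Hc Hzero HX Hl.
  replace (2 ^ S k * M / p ^ k * Cnorm X ^ k) with (2 ^ S k * M * (Cnorm X / p) ^ k)
    by (unfold Rdiv; rewrite Rpow_mult_distr, pow_inv; ring).
  assert (Hy : 0 <= Cnorm X / p <= /2).
  { split; [apply Rdiv_le_0_compat; [apply Cnorm_ge0 | lra]|].
    apply Rmult_le_reg_r with p; [lra|]. field_simplify; lra. }
  apply (Cseries_tail_le (fun n => Cmul (c n) (Cpow X n)) _ _ _ _ Hy).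
  - intros n Hn. cbv beta. rewrite Hzero by exact Hn. ring.
  - intro n. now apply pseries_term_le.
  - exact Hl.
Qed.

(** * Nonvanishing of the linear coefficient *)

Lemma quadratic_bound_not_linear_lower_bound (f : R -> R) C C' delta eta :
  0 < delta -> 0 < eta -> 0 <= C -> 0 <= C' ->
  (forall h, 0 < h < delta -> f h <= C * h ^ 2) ->
  (forall h, 0 < h < delta -> f h <= eta -> h <= C' * f h) -> False.
Proof.
  intros Hdelta Heta HC HC' Hquad Hlin.
  set (K := C * C' + 1). assert (HK : 0 < K) by (unfold K; nra).
  pose proof (Rmin_l (Rmin (delta / 2) 1) (Rmin (eta / (C + 1)) (/ (2 * K)))).
  pose proof (Rmin_r (Rmin (delta / 2) 1) (Rmin (eta / (C + 1)) (/ (2 * K)))).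
  pose proof (Rmin_l (delta / 2) 1). pose proof (Rmin_r (delta / 2) 1).
  pose proof (Rmin_l (eta / (C + 1)) (/ (2 * K))). pose proof (Rmin_r (eta / (C + 1)) (/ (2 * K))).
  set (h := Rmin (Rmin (delta / 2) 1) (Rmin (eta / (C + 1)) (/ (2 * K)))) in *.
  assert (Hh : 0 < h).
  { repeat apply Rmin_glb_lt; try lra.
    - apply Rdiv_lt_0_compat; lra.
    - apply Rinv_0_lt_compat. lra. }
  assert (Heta_h : (C + 1) * h <= eta).
  { apply Rle_trans with ((C + 1) * (eta / (C + 1))); [apply Rmult_le_compat_l; lra|].
    right. field. lra. }
  assert (HK_h : 2 * K * h <= 1).
  { apply Rle_trans with (2 * K * / (2 * K)); [apply Rmult_le_compat_l; lra|].
    right. field. lra. }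
  assert (Hf : f h <= C * h ^ 2) by (apply Hquad; lra).
  assert (Hsmall : C * h ^ 2 <= (C + 1) * h).
  { assert (0 <= C * h * (1 - h)) by (apply Rmult_le_pos; [apply Rmult_le_pos|]; lra).
    simpl. nra. }
  assert (Hlow : h <= C' * (C * h ^ 2)).
  { apply Rle_trans with (C' * f h); [apply Hlin; lra|]. apply Rmult_le_compat_l; lra. }
  unfold K in HK_h. simpl in Hlow. nra.
Qed.

Lemma inverse_pseries_coef1_neq0 (g : R -> Cx) t0 a r d b s e :
  0 < r -> radius_ge a r -> 0 < d ->
  (forall t, t0 - d < t < t0 + d ->
     Cseries_cv (fun n => Cmul (a n) (Cpow (RtoC (t - t0)) n)) (g t)) ->
  0 < s -> radius_ge b s -> 0 < e ->
  (forall t, t0 - e < t < t0 + e ->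
     Cseries_cv (fun n => Cmul (b n) (Cpow (Csub (g t) (g t0)) n)) (RtoC t)) ->
  a 1%nat <> (0, 0).
Proof.
  intros Hr Ha Hd Hga Hs Hb He Hgb Ha1.
  destruct (radius_coef_bounded a r (r / 2) Ha) as [M [HM HaM]]; [lra|].
  destruct (radius_coef_bounded b s (s / 2) Hb) as [M' [HM' HbM]]; [lra|].
  assert (Ha0 : g t0 = a O).
  { assert (H0 := Hga t0 ltac:(lra)). rewrite Rminus_diag in H0.
    exact (pseries_at_center _ _ H0). }
  assert (Hb0 : RtoC t0 = b O).
  { assert (H0 := Hgb t0 ltac:(lra)). rewrite Csub_diag in H0.
    exact (pseries_at_center _ _ H0). }
  pose proof (Rmin_l (Rmin d e) (r / 4)). pose proof (Rmin_r (Rmin d e) (r / 4)).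
  pose proof (Rmin_l d e). pose proof (Rmin_r d e).
  set (delta := Rmin (Rmin d e) (r / 4)) in *.
  assert (Hdelta : 0 < delta) by (unfold delta; repeat apply Rmin_glb_lt; lra).
  assert (Hquad : forall h, 0 < h < delta ->
            Cnorm (Csub (g (t0 + h)) (g t0)) <= 2 ^ 3 * M / (r / 2) ^ 2 * h ^ 2).
  { intros h Hh. replace (h ^ 2) with (Cnorm (RtoC h) ^ 2)
      by (rewrite Cnorm_RtoC, Rabs_pos_eq; lra).
    apply (pseries_tail_le (Cdrop0 a) (r / 2) M 2 (RtoC h)).
    - lra.
    - apply Cdrop0_coef_le; [lra | exact HaM].
    - intros [|[|n]] Hn; [reflexivity | exact Ha1 | lia].
    - rewrite Cnorm_RtoC, Rabs_pos_eq; lra.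
    - assert (Hser := Hga (t0 + h) ltac:(lra)).
      replace (t0 + h - t0) with h in Hser by ring.
      rewrite Ha0. exact (pseries_drop0 _ _ _ Hser). }
  assert (Hlin : forall h, 0 < h < delta -> Cnorm (Csub (g (t0 + h)) (g t0)) <= s / 4 ->
            h <= 2 ^ 2 * M' / (s / 2) ^ 1 * Cnorm (Csub (g (t0 + h)) (g t0))).
  { intros h Hh HW.
    assert (Hser := Hgb (t0 + h) ltac:(lra)). apply pseries_drop0 in Hser.
    rewrite <- Hb0, <- RtoC_sub in Hser. replace (t0 + h - t0) with h in Hser by ring.
    pose proof (pseries_tail_le (Cdrop0 b) (s / 2) M' 1 (Csub (g (t0 + h)) (g t0)) (RtoC h)
                  ltac:(lra)
                  ltac:(apply Cdrop0_coef_le; [lra | exact HbM])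
                  ltac:(intros [|n] Hn; [reflexivity | lia]) ltac:(lra) Hser) as Hle.
    rewrite Cnorm_RtoC, Rabs_pos_eq, !pow_1 in Hle by lra. now rewrite pow_1. }
  refine (quadratic_bound_not_linear_lower_bound _ _ _ delta (s / 4) Hdelta _ _ _ Hquad Hlin);
    [lra | |]; apply Rdiv_le_0_compat; try (apply pow_lt; lra); simpl; lra.
Qed.

(** * Local conformality of a power series *)

Lemma INR_le_pow2 n : INR n <= 2 ^ n.
Proof.
  induction n as [|n IH]; [simpl; lra|].
  rewrite S_INR. pose proof (pow_R1_Rle 2 n ltac:(lra)). simpl. lra.
Qed.

Lemma INR_mul_pow_le n q : 0 <= q -> INR n * q ^ n <= (2 * q) ^ n.
Proof.
  intro Hq. rewrite Rpow_mult_distr.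
  apply Rmult_le_compat_r; [apply pow_le; lra | apply INR_le_pow2].
Qed.

Lemma INR_sqr_mul_pow_le n q : 0 <= q -> INR n ^ 2 * q ^ n <= (4 * q) ^ n.
Proof.
  intro Hq. replace (4 * q) with (2 * (2 * q)) by ring. rewrite Rpow_mult_distr.
  replace (INR n ^ 2 * q ^ n) with (INR n * (INR n * q ^ n)) by ring.
  apply Rmult_le_compat; [apply pos_INR | | apply INR_le_pow2 | now apply INR_mul_pow_le].
  apply Rmult_le_pos; [apply pos_INR | apply pow_le; lra].
Qed.

Lemma Cpow_sub_le w z rho n : Cnorm w <= rho -> Cnorm z <= rho ->
  rho * Cnorm (Csub (Cpow w n) (Cpow z n)) <= INR n * rho ^ n * Cnorm (Csub w z).
Proof.
  intros Hw Hz. pose proof (Cnorm_ge0 w). pose proof (Cnorm_ge0 z).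
  pose proof (Cnorm_ge0 (Csub w z)). assert (0 <= rho) by lra.
  induction n as [|n IH].
  - cbn [Cpow INR]. rewrite Csub_diag, Cnorm_zero. lra.
  - replace (Csub (Cpow w (S n)) (Cpow z (S n)))
      with (Cadd (Cmul w (Csub (Cpow w n) (Cpow z n))) (Cmul (Cpow z n) (Csub w z)))
      by (cbn [Cpow]; ring).
    eapply Rle_trans; [apply Rmult_le_compat_l; [lra | apply Cnorm_add_le]|].
    rewrite !Cnorm_mul, Cnorm_pow.
    pose proof (Cnorm_ge0 (Csub (Cpow w n) (Cpow z n))).
    assert (Cnorm z ^ n <= rho ^ n) by (apply pow_incr; lra).
    assert (Cnorm w * (rho * Cnorm (Csub (Cpow w n) (Cpow z n)))
            <= rho * (INR n * rho ^ n * Cnorm (Csub w z))) by (apply Rmult_le_compat; nra).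
    assert (rho * Cnorm z ^ n * Cnorm (Csub w z) <= rho * rho ^ n * Cnorm (Csub w z)).
    { apply Rmult_le_compat_r; [lra|]. apply Rmult_le_compat_l; lra. }
    replace (INR (S n) * rho ^ S n * Cnorm (Csub w z))
      with (rho * (INR n * rho ^ n * Cnorm (Csub w z)) + rho * rho ^ n * Cnorm (Csub w z))
      by (rewrite S_INR; simpl; ring).
    lra.
Qed.

Definition Cpow_rem (w z : Cx) (n : nat) : Cx :=
  Csub (Csub (Cpow w (S n)) (Cpow z (S n)))
       (Cmul (Cmul (RtoC (INR (S n))) (Cpow z n)) (Csub w z)).

Lemma Cpow_rem_succ w z n : Cpow_rem w z (S n) =
  Cadd (Cmul w (Cpow_rem w z n))
       (Cmul (Cmul (RtoC (INR (S n))) (Cpow z n)) (Cmul (Csub w z) (Csub w z))).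
Proof.
  unfold Cpow_rem. rewrite (S_INR (S n)), RtoC_add. change (RtoC 1) with ((1, 0) : Cx).
  cbn [Cpow]. ring.
Qed.

Lemma Cpow_rem_le w z rho n : Cnorm w <= rho -> Cnorm z <= rho ->
  rho ^ 2 * Cnorm (Cpow_rem w z n) <= INR (S n) ^ 2 * rho ^ S n * Cnorm (Csub w z) ^ 2.
Proof.
  intros Hw Hz. pose proof (Cnorm_ge0 z). pose proof (Cnorm_ge0 w).
  pose proof (Cnorm_ge0 (Csub w z)). assert (0 <= rho) by lra.
  induction n as [|n IH].
  - unfold Cpow_rem. cbn [Cpow INR].
    replace (Csub (Csub (Cmul w (1, 0)) (Cmul z (1, 0))) (Cmul (Cmul (RtoC 1) (1, 0)) (Csub w z)))
      with ((0, 0) : Cx) by (change (RtoC 1) with ((1, 0) : Cx); ring).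
    rewrite Cnorm_zero. simpl. nra.
  - rewrite Cpow_rem_succ.
    eapply Rle_trans; [apply Rmult_le_compat_l; [nra | apply Cnorm_add_le]|].
    rewrite !Cnorm_mul, Cnorm_pow, Cnorm_RtoC, Rabs_pos_eq by apply pos_INR.
    pose proof (Cnorm_ge0 (Cpow_rem w z n)). pose proof (pos_INR (S n)).
    assert (Cnorm z ^ n <= rho ^ n) by (apply pow_incr; lra).
    assert (0 <= rho ^ n) by (apply pow_le; lra).
    assert (Cnorm w * (rho ^ 2 * Cnorm (Cpow_rem w z n))
            <= rho * (INR (S n) ^ 2 * rho ^ S n * Cnorm (Csub w z) ^ 2)).
    { apply Rmult_le_compat; try lra. apply Rmult_le_pos; [apply pow_le|]; lra. }
    assert (rho ^ 2 * (INR (S n) * Cnorm z ^ n * (Cnorm (Csub w z) * Cnorm (Csub w z)))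
            <= INR (S n) * rho ^ S (S n) * Cnorm (Csub w z) ^ 2).
    { replace (INR (S n) * rho ^ S (S n) * Cnorm (Csub w z) ^ 2)
        with (rho ^ 2 * (INR (S n) * rho ^ n * (Cnorm (Csub w z) * Cnorm (Csub w z))))
        by (simpl; ring).
      apply Rmult_le_compat_l; [apply pow_le; lra|].
      apply Rmult_le_compat_r; [nra|]. apply Rmult_le_compat_l; lra. }
    assert (0 <= INR (S n) * rho ^ S (S n) * Cnorm (Csub w z) ^ 2).
    { apply Rmult_le_pos; [apply Rmult_le_pos; [lra | apply pow_le; lra] | apply pow_le; lra]. }
    replace (INR (S (S n)) ^ 2 * rho ^ S (S n) * Cnorm (Csub w z) ^ 2)
      with (rho * (INR (S n) ^ 2 * rho ^ S n * Cnorm (Csub w z) ^ 2)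
            + (2 * INR (S n) + 1) * rho ^ S (S n) * Cnorm (Csub w z) ^ 2)
      by (rewrite (S_INR (S n)); simpl; ring).
    assert (0 <= rho ^ S (S n) * Cnorm (Csub w z) ^ 2).
    { apply Rmult_le_pos; apply pow_le; lra. }
    nra.
Qed.

(* the sum of the series where it converges, an arbitrary value elsewhere *)
Definition psum c z : Cx :=
  epsilon (inhabits (0, 0)) (Cseries_cv (fun n => Cmul (c n) (Cpow z n))).

Definition deriv_coef c z n : Cx :=
  match n with O => (0, 0) | S m => Cmul (c (S m)) (Cmul (RtoC (INR (S m))) (Cpow z m)) end.

Section PsumNearZero.

Variables (a : nat -> Cx) (M rho q : R).
Hypotheses (rho_pos : 0 < rho) (q_bounds : 0 <= q <= /8)
  (coef_le : forall n, Cnorm (a n) * rho ^ n <= M * q ^ n).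

(* used implicitly by [lra] and [nra] below *)
Let M_ge0 : 0 <= M.
Proof. pose proof (coef_le O). pose proof (Cnorm_ge0 (a O)). simpl in *. lra. Qed.

Lemma coef_INR_le n : Cnorm (a n) * (INR n * rho ^ n) <= M * (2 * q) ^ n.
Proof.
  replace (Cnorm (a n) * (INR n * rho ^ n)) with (INR n * (Cnorm (a n) * rho ^ n)) by ring.
  eapply Rle_trans; [apply Rmult_le_compat_l; [apply pos_INR | apply coef_le]|].
  replace (INR n * (M * q ^ n)) with (M * (INR n * q ^ n)) by ring.
  apply Rmult_le_compat_l; [lra | apply INR_mul_pow_le; lra].
Qed.

Lemma coef_INR_sqr_le n : Cnorm (a n) * (INR n ^ 2 * rho ^ n) <= M * (4 * q) ^ n.
Proof.
  replace (Cnorm (a n) * (INR n ^ 2 * rho ^ n)) with (INR n ^ 2 * (Cnorm (a n) * rho ^ n))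
    by ring.
  eapply Rle_trans; [apply Rmult_le_compat_l; [apply pow_le, pos_INR | apply coef_le]|].
  replace (INR n ^ 2 * (M * q ^ n)) with (M * (INR n ^ 2 * q ^ n)) by ring.
  apply Rmult_le_compat_l; [lra | apply INR_sqr_mul_pow_le; lra].
Qed.

Lemma psum_spec z : Cnorm z <= rho -> Cseries_cv (fun n => Cmul (a n) (Cpow z n)) (psum a z).
Proof.
  intro Hz. unfold psum. apply epsilon_spec.
  apply (Cseries_ex_geom _ M q); [lra|]. intro n.
  rewrite Cnorm_mul, Cnorm_pow. eapply Rle_trans; [|apply coef_le].
  apply Rmult_le_compat_l; [apply Cnorm_ge0 | apply pow_incr; split; [apply Cnorm_ge0 | lra]].
Qed.

Lemma deriv_coef_le z n : Cnorm z <= rho -> Cnorm (deriv_coef a z n) <= M / rho * (2 * q) ^ n.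
Proof.
  intro Hz. destruct n as [|m]; cbn [deriv_coef].
  - rewrite Cnorm_zero. apply Rmult_le_pos; [apply Rdiv_le_0_compat | apply pow_le]; lra.
  - rewrite !Cnorm_mul, Cnorm_pow, Cnorm_RtoC, Rabs_pos_eq by apply pos_INR.
    apply Rmult_le_reg_l with rho; [exact rho_pos|].
    replace (rho * (M / rho * (2 * q) ^ S m)) with (M * (2 * q) ^ S m) by (field; lra).
    eapply Rle_trans; [|apply coef_INR_le].
    replace (Cnorm (a (S m)) * (INR (S m) * rho ^ S m))
      with (Cnorm (a (S m)) * (rho * (INR (S m) * rho ^ m))) by (simpl; ring).
    rewrite <- Rmult_assoc, (Rmult_comm rho), Rmult_assoc.
    apply Rmult_le_compat_l; [apply Cnorm_ge0|]. apply Rmult_le_compat_l; [lra|].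
    apply Rmult_le_compat_l; [apply pos_INR|].
    apply pow_incr; split; [apply Cnorm_ge0 | lra].
Qed.

Lemma psum_linear_approx z : Cnorm z <= rho -> exists L, forall w, Cnorm w <= rho ->
  Cnorm (Csub (Csub (psum a w) (psum a z)) (Cmul L (Csub w z)))
    <= 2 * M / rho ^ 2 * Cnorm (Csub w z) ^ 2.
Proof.
  intro Hz.
  destruct (Cseries_ex_geom (deriv_coef a z) (M / rho) (2 * q)) as [L HL]; [lra|..].
  { intro n. now apply deriv_coef_le. }
  exists L. intros w Hw.
  pose proof (Cseries_sub _ _ _ _ (Cseries_sub _ _ _ _ (psum_spec w Hw) (psum_spec z Hz))
                (Cseries_mulr _ _ (Csub w z) HL)) as Hser.
  cbv beta in Hser. set (d := Cnorm (Csub w z)) in *.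
  replace (2 * M / rho ^ 2 * d ^ 2) with (2 ^ 1 * (M * d ^ 2 / rho ^ 2) * (4 * q) ^ 0)
    by (simpl; field; lra).
  refine (Cseries_tail_le _ _ _ (4 * q) 0 _ _ _ Hser); [lra | intros n Hn; lia|].
  intros [|m]; cbn [deriv_coef].
  - cbn [Cpow].
    match goal with |- Cnorm ?t <= _ => replace t with ((0, 0) : Cx) by ring end.
    rewrite Cnorm_zero. apply Rmult_le_pos; [|apply pow_le; lra].
    apply Rdiv_le_0_compat; [apply Rmult_le_pos; [lra | apply pow2_ge_0] | apply pow_lt; lra].
  - match goal with |- Cnorm ?t <= _ =>
      replace t with (Cmul (a (S m)) (Cpow_rem w z m)) by (unfold Cpow_rem; ring) end.
    rewrite Cnorm_mul. apply Rmult_le_reg_l with (rho ^ 2); [apply pow_lt; lra|].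
    replace (rho ^ 2 * (M * d ^ 2 / rho ^ 2 * (4 * q) ^ S m))
      with (M * (4 * q) ^ S m * d ^ 2) by (field; lra).
    eapply Rle_trans; [|apply Rmult_le_compat_r; [apply pow2_ge_0 | apply coef_INR_sqr_le]].
    replace (rho ^ 2 * (Cnorm (a (S m)) * Cnorm (Cpow_rem w z m)))
      with (Cnorm (a (S m)) * (rho ^ 2 * Cnorm (Cpow_rem w z m))) by ring.
    rewrite Rmult_assoc. apply Rmult_le_compat_l; [apply Cnorm_ge0|].
    now apply Cpow_rem_le.
Qed.

Lemma psum_sub_linear_le z w : Cnorm z <= rho -> Cnorm w <= rho ->
  Cnorm (Csub (Csub (psum a w) (psum a z)) (Cmul (a 1%nat) (Csub w z)))
    <= 32 * M * q ^ 2 / rho * Cnorm (Csub w z).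
Proof.
  intros Hz Hw.
  pose proof (Cseries_sub _ _ _ _ (Cseries_sub _ _ _ _ (psum_spec w Hw) (psum_spec z Hz))
                (Cseries_single 1 (Cmul (a 1%nat) (Csub w z)))) as Hser.
  cbv beta in Hser. set (d := Cnorm (Csub w z)) in *.
  assert (Hd : 0 <= d) by apply Cnorm_ge0.
  replace (32 * M * q ^ 2 / rho * d) with (2 ^ 3 * (M * d / rho) * (2 * q) ^ 2)
    by (simpl; field; lra).
  refine (Cseries_tail_le _ _ _ (2 * q) 2 _ _ _ Hser); [lra| |].
  - intros [|[|n]] Hn; cbn [Cpow Nat.eqb]; [ring | ring | lia].
  - intros [|[|m]]; cbn [Nat.eqb].
    1, 2: cbn [Cpow];
      match goal with |- Cnorm ?t <= _ => replace t with ((0, 0) : Cx) by ring end;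
      rewrite Cnorm_zero; apply Rmult_le_pos; [|apply pow_le; lra];
      apply Rdiv_le_0_compat; [nra | lra].
    set (n := S (S m)).
    match goal with |- Cnorm ?t <= _ =>
      replace t with (Cmul (a n) (Csub (Cpow w n) (Cpow z n))) by ring end.
    rewrite Cnorm_mul. apply Rmult_le_reg_l with rho; [exact rho_pos|].
    replace (rho * (M * d / rho * (2 * q) ^ n)) with (M * (2 * q) ^ n * d) by (field; lra).
    eapply Rle_trans; [|apply Rmult_le_compat_r; [exact Hd | apply coef_INR_le]].
    replace (rho * (Cnorm (a n) * Cnorm (Csub (Cpow w n) (Cpow z n))))
      with (Cnorm (a n) * (rho * Cnorm (Csub (Cpow w n) (Cpow z n)))) by ring.
    rewrite Rmult_assoc. apply Rmult_le_compat_l; [apply Cnorm_ge0|].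
    now apply Cpow_sub_le.
Qed.

Lemma psum_injective z w : 32 * M * q ^ 2 / rho < Cnorm (a 1%nat) ->
  Cnorm z <= rho -> Cnorm w <= rho -> psum a z = psum a w -> z = w.
Proof.
  intros Ha1 Hz Hw Heq.
  pose proof (psum_sub_linear_le w z Hw Hz) as Happrox.
  rewrite Heq, Csub_diag in Happrox.
  replace (Csub (0, 0) (Cmul (a 1%nat) (Csub z w))) with (Copp (Cmul (a 1%nat) (Csub z w)))
    in Happrox by ring.
  rewrite Cnorm_opp, Cnorm_mul in Happrox.
  pose proof (Cnorm_ge0 (Csub z w)).
  apply Csub_eq0, Cnorm_eq0. nra.
Qed.

End PsumNearZero.

Definition Cball (z0 : Cx) (r : R) (z : Cx) : Prop := Cnorm (Csub z z0) < r.

Lemma Cball_open z0 r : Copen (Cball z0 r).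
Proof.
  intros z Hz. exists (r - Cnorm (Csub z z0)). unfold Cball in *. split; [lra|].
  intros w Hw. pose proof (Cnorm_sub_le w z z0). lra.
Qed.

Lemma holomorphic_on_of_quadratic_approx (V : Cx -> Prop) (phi : Cx -> Cx) C : 0 <= C ->
  (forall z, V z -> exists L, forall w, V w ->
     Cnorm (Csub (Csub (phi w) (phi z)) (Cmul L (Csub w z))) <= C * Cnorm (Csub w z) ^ 2) ->
  holomorphic_on V phi.
Proof.
  intros HC Happrox z Hz. destruct (Happrox z Hz) as [L HL]. exists L. intros eps Heps.
  exists (eps / (C + 1)). split; [apply Rdiv_lt_0_compat; lra|]. intros w Hw Hwz.
  eapply Rle_trans; [apply (HL w Hw)|].
  pose proof (Cnorm_ge0 (Csub w z)).
  assert (C * Cnorm (Csub w z) <= eps).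
  { apply Rle_trans with ((C + 1) * Cnorm (Csub w z)); [nra|].
    apply Rmult_le_reg_r with (/ (C + 1)); [apply Rinv_0_lt_compat; lra|].
    replace ((C + 1) * Cnorm (Csub w z) * / (C + 1)) with (Cnorm (Csub w z)) by (field; lra).
    unfold Rdiv in Hwz. lra. }
  simpl. nra.
Qed.

Lemma pseries_small_disc a r : 0 < r -> radius_ge a r -> 0 < Cnorm (a 1%nat) ->
  exists M rho q, 0 < M /\ 0 < rho /\ 0 <= q <= /8 /\
    (forall n, Cnorm (a n) * rho ^ n <= M * q ^ n) /\ 32 * M * q ^ 2 / rho < Cnorm (a 1%nat).
Proof.
  intros Hr Ha HA1. set (A1 := Cnorm (a 1%nat)) in *.
  set (p := r / 2). assert (Hp : 0 < p) by (unfold p; lra).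
  destruct (radius_coef_bounded a r p Ha) as [M [HM HaM]]; [unfold p; lra|].
  pose proof (Rmin_l (p / 8) (A1 * p ^ 2 / (64 * M))).
  pose proof (Rmin_r (p / 8) (A1 * p ^ 2 / (64 * M))).
  set (rho := Rmin (p / 8) (A1 * p ^ 2 / (64 * M))) in *.
  assert (Hrho : 0 < rho).
  { apply Rmin_glb_lt; [lra|]. apply Rdiv_lt_0_compat; [|lra].
    apply Rmult_lt_0_compat; [lra | apply pow_lt; lra]. }
  exists M, rho, (rho / p). split; [exact HM|]. split; [exact Hrho|]. split; [|split].
  - split; [apply Rdiv_le_0_compat; lra|].
    apply Rmult_le_reg_r with p; [lra|]. field_simplify; lra.
  - intro n.
    replace (rho ^ n) with (p ^ n * (rho / p) ^ n)
      by (rewrite <- Rpow_mult_distr; f_equal; field; lra).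
    rewrite <- Rmult_assoc.
    apply Rmult_le_compat_r; [apply pow_le, Rdiv_le_0_compat; lra | apply HaM].
  - replace (32 * M * (rho / p) ^ 2 / rho) with (32 * M / p ^ 2 * rho) by (field; lra).
    apply Rle_lt_trans with (32 * M / p ^ 2 * (A1 * p ^ 2 / (64 * M))).
    + apply Rmult_le_compat_l; [|lra]. apply Rdiv_le_0_compat; [lra | apply pow_lt; lra].
    + replace (32 * M / p ^ 2 * (A1 * p ^ 2 / (64 * M))) with (A1 / 2)
        by (field; repeat split; try apply pow_nonzero; lra).
      lra.
Qed.

Lemma pseries_locally_conformal a r z0 : 0 < r -> radius_ge a r -> a 1%nat <> (0, 0) ->
  exists rho, 0 < rho /\
    holomorphic_on (Cball z0 rho) (fun z => psum a (Csub z z0)) /\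
    injective_on (Cball z0 rho) (fun z => psum a (Csub z z0)) /\
    forall z, Cball z0 rho z ->
      Cseries_cv (fun n => Cmul (a n) (Cpow (Csub z z0) n)) (psum a (Csub z z0)).
Proof.
  intros Hr Ha Ha1.
  assert (HA1 : 0 < Cnorm (a 1%nat)).
  { destruct (Rle_lt_dec (Cnorm (a 1%nat)) 0); [|easy].
    exfalso. apply Ha1, Cnorm_eq0. pose proof (Cnorm_ge0 (a 1%nat)). lra. }
  destruct (pseries_small_disc a r Hr Ha HA1) as (M & rho & q & HM & Hrho & Hq & Hcoef & Hsmall).
  exists rho. split; [exact Hrho|]. unfold Cball. split; [|split].
  - apply (holomorphic_on_of_quadratic_approx _ _ (2 * M / rho ^ 2)).
    { apply Rdiv_le_0_compat; [lra | apply pow_lt; lra]. }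
    intros z Hz.
    destruct (psum_linear_approx a M rho q Hrho Hq Hcoef (Csub z z0)) as [L HL]; [lra|].
    exists L. intros w Hw.
    replace (Csub w z) with (Csub (Csub w z0) (Csub z z0)) by ring. apply HL. lra.
  - intros z w Hz Hw Heq.
    replace z with (Cadd (Csub z z0) z0) by ring. replace w with (Cadd (Csub w z0) z0) by ring.
    f_equal. apply (psum_injective a M rho q Hrho Hq Hcoef); [exact Hsmall | lra | lra | exact Heq].
  - intros z Hz. apply (psum_spec a M rho q Hq Hcoef). lra.
Qed.

Lemma cond2_self (g : R -> Cx) a b t0 : a < t0 < b -> cond2 g a b t0 g.
Proof.
  intro Ht. pose proof (Rmin_l (t0 - a) (b - t0)). pose proof (Rmin_r (t0 - a) (b - t0)).
  set (m := Rmin (t0 - a) (b - t0)) in *.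
  assert (Hm : 0 < m) by (apply Rmin_glb_lt; lra).
  exists (affine_coef (g t0)), m, m.
  split; [lra|]. split; [apply affine_radius|]. split; [lra|].
  split; [intros t Htm; lra|].
  intros t _. pose proof (affine_series (g t0) (Csub (g t) (g t0))) as Hser.
  now replace (Cadd (g t0) (Csub (g t) (g t0))) with (g t) in Hser by ring.
Qed.

Lemma cond1_RtoC a b t0 : a < t0 < b -> cond1 a b t0 RtoC.
Proof.
  intro Ht. pose proof (Rmin_l (t0 - a) (b - t0)). pose proof (Rmin_r (t0 - a) (b - t0)).
  set (m := Rmin (t0 - a) (b - t0)) in *.
  assert (Hm : 0 < m) by (apply Rmin_glb_lt; lra).
  exists (affine_coef (RtoC t0)), m, m.
  split; [lra|]. split; [apply affine_radius|]. split; [lra|].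
  split; [intros t Htm; lra|].
  intros t _. replace (RtoC t) with (Cadd (RtoC t0) (RtoC (t - t0))) by (rewrite RtoC_sub; ring).
  apply affine_series.
Qed.

Theorem lemma5p5 (gamma : R -> Cx) (t0 : R) :
  jordan_arc gamma -> 0 < t0 < 1 ->
  (forall (a b : R) (f : R -> Cx), 0 <= a -> a < t0 -> t0 < b -> b <= 1 ->
     (cond1 a b t0 f <-> cond2 gamma a b t0 f)) ->
  exists (d : R) (V : Cx -> Prop) (phi : Cx -> Cx),
    d > 0 /\ (forall t, t0 - d < t < t0 + d -> 0 <= t <= 1) /\
    Copen V /\ (forall t, t0 - d < t < t0 + d -> V (RtoC t)) /\
    holomorphic_on V phi /\ injective_on V phi /\
    (forall t, t0 - d < t < t0 + d -> phi (RtoC t) = gamma t).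
Proof.
  intros _ Ht Hequiv.
  assert (Hgamma : cond1 0 1 t0 gamma) by (apply Hequiv; try lra; apply cond2_self; lra).
  assert (Hinverse : cond2 gamma 0 1 t0 RtoC) by (apply Hequiv; try lra; apply cond1_RtoC; lra).
  destruct Hgamma as [a [r [d [Hr [Ha [Hd [Hd01 Hga]]]]]]].
  destruct Hinverse as [b [s [e [Hs [Hb [He [_ Hgb]]]]]]].
  pose proof (inverse_pseries_coef1_neq0 gamma t0 a r d b s e Hr Ha ltac:(lra) Hga
                Hs Hb ltac:(lra) Hgb) as Ha1.
  destruct (pseries_locally_conformal a r (RtoC t0) Hr Ha Ha1)
    as [rho [Hrho [Hhol [Hinj Hsum]]]].
  pose proof (Rmin_l d rho). pose proof (Rmin_r d rho).
  set (delta := Rmin d rho) in *.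
  assert (Hreal : forall t, t0 - delta < t < t0 + delta -> Cball (RtoC t0) rho (RtoC t)).
  { intros t Htd. unfold Cball. rewrite <- RtoC_sub, Cnorm_RtoC. apply Rabs_def1; lra. }
  exists delta, (Cball (RtoC t0) rho), (fun z => psum a (Csub z (RtoC t0))).
  repeat split.
  - apply Rmin_glb_lt; lra.
  - pose proof (Hd01 t ltac:(lra)). lra.
  - pose proof (Hd01 t ltac:(lra)). lra.
  - apply Cball_open.
  - exact Hreal.
  - exact Hhol.
  - exact Hinj.
  - intros t Htd. apply (Cseries_unique _ _ _ (Hsum _ (Hreal t Htd))).
    rewrite <- RtoC_sub. apply Hga. lra.
Qed.
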